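(* Let $\mathbb{K}$ be an algebraically closed field of characteristic $0$ and $p\in\mathbb{K}[x,y]\setminus(\mathbb{K}[x]\cup\mathbb{K}[y])$ irreducible. Define $Q_0(x,y)=p(x,y)$ and $Q_{n+1}(x,y)=\mathrm{sfp}\big(\mathrm{res}_z(Q_n(x,z),Q_n(y,z))\big)$ for $n\ge0$. Let $n>0$ and $x_0,y_0\in\mathbb{K}$, where $x_0$ is not a root of $\mathrm{lc}_y(Q_k)$ for any $k<n$, and $\infty$ is not a coordinate of any element of the orbit of $x_0$. Then \[ Q_n(x_0,y_0)=0\iff y_0\in S^{2^{n-1}}(\{x_0\}), \] where $S=\pi_1\circ\pi_2^{-1}\circ\pi_2\circ\pi_1^{-1}$.
   Context: $C\subset\mathbb{P}^1(\mathbb{K})\times\mathbb{P}^1(\mathbb{K})$ is the curve defined by the bi-homogenization $x_0^{\deg_x p}y_0^{\deg_y p}p(x_1/x_0,y_1/y_0)$, and $\pi_1,\pi_2:C\to\mathbb{P}^1(\mathbb{K})$ are the projections to the first and second coordinate. For a set $A\subseteq\mathbb{P}^1(\mathbb{K})$, $S(A)=\pi_1(\pi_2^{-1}(\pi_2(\pi_1^{-1}(A))))=\{a'\,:\,\exists a\in A,\ \exists b\ \text{with } (a,b)\in C,\ (a',b)\in C\}$, and $S^m$ is its $m$-fold iterate. Orbits are the classes of the smallest equivalence relation on $C$ with $(a,b)\sim(c,d)$ whenever $a=c$ or $b=d$; the orbit of $x_0$ is the orbit of a point of $C$ with first coordinate $x_0$. $\mathrm{res}_z$ is the resultant with respect to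 $z$, $\mathrm{sfp}$ the square-free part, and $\mathrm{lc}_y(Q)\in\mathbb{K}[x]$ the leading coefficient of $Q$ as a polynomial in $y$. *)

From HB Require Import structures.
From mathcomp Require Import all_boot all_order all_algebra.

From Stdlib Require Import Relations.Relation_Operators.
Set Implicit Arguments. Unset Strict Implicit. Unset Printing Implicit Defensive.
Import Order.TTheory GRing.Theory Num.Theory.
Local Open Scope ring_scope.

(* Bivariate polynomials in K[x,y] are represented as {poly {poly K}}:
   the OUTER variable is y, the coefficients (inner polys) are in x.
   So p = \sum_j ((nth 0%R p j))(x) y^j and p(x0,y0) = p.[y0%:P].[x0]. *)

Section Defs.
Variable K : fieldType.

Definition rdvd (R : comNzRingType) (a b : R) : Prop := exists c, b = c * a.

Definition irreducible_XY (p : {poly {poly K}}) : Prop :=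
  p != 0 /\ p \isn't a GRing.unit /\
  forall a b : {poly {poly K}}, p = a * b -> a \is a GRing.unit \/ b \is a GRing.unit.

Definition notin_Kx (p : {poly {poly K}}) : Prop := (1 < size p)%N.
Definition notin_Ky (p : {poly {poly K}}) : Prop := exists j, (1 < size (nth 0%R p j))%N.

Definition is_sfp (q f : {poly {poly K}}) : Prop :=
  (f = 0 -> q = 0) /\
  (f != 0 ->
     [/\ rdvd q f, exists k, rdvd f (q ^+ k) &
         forall d : {poly {poly K}}, rdvd (d * d) q -> d \is a GRing.unit]).

(* res_z(Q(x,z), Q(y,z)) : Q is read as a polynomial in z with coefficients in K[x];
   Q(x,z) and Q(y,z) are polynomials in z with coefficients in K[x,y]. *)
Definition res_step (Q : {poly {poly K}}) : {poly {poly K}} :=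
  resultant (map_poly polyC Q) (map_poly (map_poly polyC) Q).

Definition degy (p : {poly {poly K}}) : nat := (size p).-1.
Definition degx (p : {poly {poly K}}) : nat := (\max_(j < size p) (size (nth 0%R p j)).-1)%N.

(* the bi-homogenization  x0^dx y0^dy p(x1/x0, y1/y0)  evaluated at (u0,u1),(v0,v1) *)
Definition bihom_eval (p : {poly {poly K}}) (u0 u1 v0 v1 : K) : K :=
  \sum_(j < size p) \sum_(i < (degx p).+1)
     ((nth 0%R p j))`_i * u1 ^+ i * u0 ^+ (degx p - i) * v1 ^+ j * v0 ^+ (degy p - j).

(* P^1(K) = option K : Some t = [1:t], None = infinity = [0:1] *)
Definition P1rep (a : option K) : K * K :=
  match a with Some t => (1, t) | None => (0, 1) end.

Definition onC (p : {poly {poly K}}) (a b : option K) : Prop :=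
  bihom_eval p (P1rep a).1 (P1rep a).2 (P1rep b).1 (P1rep b).2 = 0.

Definition Smap (p : {poly {poly K}}) (A : option K -> Prop) : option K -> Prop :=
  fun a' => exists a b, A a /\ onC p a b /\ onC p a' b.

Definition orbit_step (p : {poly {poly K}}) (u v : option K * option K) : Prop :=
  onC p u.1 u.2 /\ onC p v.1 v.2 /\ (u.1 = v.1 \/ u.2 = v.2).

Definition same_orbit (p : {poly {poly K}}) : option K * option K -> option K * option K -> Prop :=
  clos_refl_trans _ (orbit_step p).

Definition orbit_finite (p : {poly {poly K}}) (x0 : K) : Prop :=
  forall (b0 : option K) (w : option K * option K),
    onC p (Some x0) b0 -> same_orbit p (Some x0, b0) w ->
    w.1 <> None /\ w.2 <> None.

End Defs.

(* Induction on k, simultaneously for all points a whose orbit avoids infinity.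
   At such a point lc_y(Q_k) does not vanish, so the resultant defining
   Q_(k+1)(a, .) can be computed by specialising x := a in a Sylvester matrix of
   fixed size; over an algebraically closed field, Q_(k+1)(a, b) = 0 then says
   that Q_k(a, .) and Q_k(b, .) have a common root z.  For k > 0, Q_k(a, z) = 0
   means by induction that z lies in S^(2^(k-1)){a}, and the zero set of Q_k is
   symmetric at such points, so the common roots compose two of these steps into
   one step of S^(2^k).  The absence of points at infinity propagates too: at
   x = a the top y-coefficient of Q_(k+1), and symmetrically its top
   x-coefficient, is the resultant of Q_k(a, .) and lc_x(Q_k), which is nonzero
   because no point (a, z) of the orbit is related to a point (oo, z). *)

From HB Require Import structures.
From mathcomp Require Import all_boot all_order all_algebra.
From mathcomp Require Import perm zify.
From Stdlib Require Import Relations.Relation_Operators.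
Import Order.TTheory GRing.Theory Num.Theory.
Set Implicit Arguments. Unset Strict Implicit. Unset Printing Implicit Defensive.
Local Open Scope ring_scope.

(* [Sylvester_mx] with formal degrees [m] for [p] and [n] for [q] instead of the
   actual ones; unlike the resultant it commutes with any ring morphism. *)
Definition Sylvester_mxn (R : nzRingType) n m (p q : {poly R}) : 'M[R]_(n + m) :=
  col_mx (lin1_mx (poly_rV \o p \o* rVpoly)) (lin1_mx (poly_rV \o q \o* rVpoly)).

Lemma Sylvester_mxnE (R : nzRingType) n m (p q : {poly R}) (i j : 'I_(n + m)) :
  Sylvester_mxn n m p q i j =
    match split i with inl k => p`_(j - k) *+ (k <= j)
                     | inr k => q`_(j - k) *+ (k <= j) end.
Proof.
rewrite /Sylvester_mxn mxE; case: {i}(split i) => i /[!mxE]/=;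
  by rewrite rVpoly_delta coefXnM ltnNge if_neg -mulrb.
Qed.

Lemma resultantE (R : nzRingType) (p q : {poly R}) :
  resultant p q = \det (Sylvester_mxn (size q).-1 (size p).-1 p q).
Proof. by []. Qed.

Lemma map_Sylvester_mxn (R S : nzRingType) (f : {rmorphism R -> S}) n m p q :
  map_mx f (Sylvester_mxn n m p q) =
    Sylvester_mxn n m (map_poly f p) (map_poly f q).
Proof.
apply/matrixP => i j; rewrite [LHS]mxE !Sylvester_mxnE.
by case: (split i) => k; rewrite rmorphMn coef_map.
Qed.

Lemma map_resultant_mxn (R : nzRingType) (S : comNzRingType)
    (f : {rmorphism R -> S}) p q :
  f (resultant p q) =
    \det (Sylvester_mxn (size q).-1 (size p).-1 (map_poly f p) (map_poly f q)).
Proof. by rewrite resultantE -det_map_mx map_Sylvester_mxn. Qed.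

Lemma mul_row_Sylvester_mxn (R : comNzRingType) n m (p q : {poly R})
    (u : 'rV_n) (v : 'rV_m) :
  row_mx u v *m Sylvester_mxn n m p q = poly_rV (rVpoly u * p + rVpoly v * q).
Proof. by rewrite mul_row_col !mul_rV_lin1 /= linearD. Qed.

Lemma Sylvester_mxn_syzygy (R : comNzRingType) n m (p q : {poly R}) (w : 'rV_(n + m)) :
  (size p <= m.+1)%N -> (size q <= n.+1)%N -> w *m Sylvester_mxn n m p q = 0 ->
  rVpoly (lsubmx w) * p + rVpoly (rsubmx w) * q = 0.
Proof.
move=> sp sq; rewrite -[w]hsubmxK mul_row_Sylvester_mxn row_mxKl row_mxKr.
move/(congr1 rVpoly); rewrite linear0 poly_rV_K //.
have su : (size (rVpoly (lsubmx w)) <= n)%N := size_poly _ _.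
have sv : (size (rVpoly (rsubmx w)) <= m)%N := size_poly _ _.
rewrite (leq_trans (size_polyD _ _)) // geq_max.
by apply/andP; split; rewrite (leq_trans (size_polyMleq _ _)) //;
  [move: (size p) sp su | move: (size q) sq sv] => k; lia.
Qed.

Section ClosedField.
Variable K : closedFieldType.

Lemma common_root_of_syzygy m (p q u v : {poly K}) :
  size p = m.+1 -> (size v <= m)%N -> u * p + v * q = 0 -> (u != 0) || (v != 0) ->
  exists z, root p z && root q z.
Proof.
move=> sp sv uv0 nz_uv.
have nz_p : p != 0 by rewrite -size_poly_eq0 sp.
have nz_v : v != 0.
  apply: contraTneq nz_uv => v0; move: uv0; rewrite v0 mul0r addr0 eqxx orbF.
  by move/eqP; rewrite mulf_eq0 (negPf nz_p) orbF => ->.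
have [cop|ncop] := boolP (coprimep p q).
  have : p %| v * q.
    have -> : v * q = - (u * p) by apply/eqP; rewrite -addr_eq0 addrC uv0.
    by rewrite dvdpNr dvdp_mull.
  by rewrite Gauss_dvdpl // => /(dvdp_leq nz_v); rewrite sp leqNgt ltnS sv.
have /closed_rootP[z] : size (gcdp p q) != 1%N by [].
by rewrite root_gcd; exists z.
Qed.

Lemma det_Sylvester_mxn_eq0 n m (p q : {poly K}) :
  (size p <= m.+1)%N -> (size q <= n.+1)%N -> size p = m.+1 \/ size q = n.+1 ->
  \det (Sylvester_mxn n m p q) = 0 <-> exists z, root p z && root q z.
Proof.
move=> sp sq full; split.
  move/eqP/det0P => [w nz_w /(Sylvester_mxn_syzygy sp sq)].
  have su : (size (rVpoly (lsubmx w)) <= n)%N := size_poly _ _.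
  have sv : (size (rVpoly (rsubmx w)) <= m)%N := size_poly _ _.
  set u := rVpoly _ in su *; set v := rVpoly _ in sv * => uv0.
  have nz_uv : (u != 0) || (v != 0).
    apply: contraNT nz_w; rewrite negb_or !negbK => /andP[/eqP u0 /eqP v0].
    rewrite -[w]hsubmxK -(rVpolyK (lsubmx w)) -(rVpolyK (rsubmx w)) -/u -/v u0 v0.
    by rewrite !linear0 row_mx0.
  case: full => full; first exact: common_root_of_syzygy full sv uv0 nz_uv.
  rewrite addrC in uv0; rewrite orbC in nz_uv.
  have [z /andP[pz qz]] := common_root_of_syzygy full su uv0 nz_uv.
  by exists z; rewrite pz qz.
case=> z /andP[/factor_theorem[p1 ep] /factor_theorem[q1 eq]]; subst p q.
have size_cofactor (r : {poly K}) k :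
    (size (r * ('X - z%:P))%R <= k.+1)%N -> (size r <= k)%N.
  have [->|nz_r] := eqVneq r 0; first by rewrite size_poly0.
  by rewrite size_mul ?polyXsubC_eq0 // size_XsubC addn2.
have {sp}sp1 := size_cofactor _ _ sp; have {sq}sq1 := size_cofactor _ _ sq.
apply/eqP/det0P; exists (row_mx (poly_rV q1) (poly_rV (- p1))); last first.
  rewrite mul_row_Sylvester_mxn !poly_rV_K ?size_polyN //.
  by rewrite mulrA mulNr mulrCA mulrA addrN linear0.
apply: contraPneq full; rewrite -row_mx0 => /eq_row_mx[q10 p10].
have sNp1 : (size (- p1) <= m)%N by rewrite size_polyN.
have -> : q1 = 0 by rewrite -(poly_rV_K sq1) q10 linear0.
have -> : p1 = 0 by rewrite -[p1]opprK -(poly_rV_K sNp1) p10 linear0 oppr0.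
by rewrite !mul0r size_poly0; case.
Qed.
End ClosedField.

Section CoefAtBound.
Variable R : comNzRingType.

Lemma coefM_at_bound (p q : {poly R}) a b :
  (size p <= a.+1)%N -> (size q <= b.+1)%N -> (p * q)`_(a + b) = p`_a * q`_b.
Proof.
move=> sp sq; have ha : (a < (a + b).+1)%N by rewrite ltnS leq_addr.
rewrite coefM (bigD1 (Ordinal ha)) //= addKn big1 ?addr0 // => -[j hj] /= /negbTE hja.
have [lt_ja|le_aj] := ltnP j a.
  by rewrite [q`_ _](leq_sizeP _ _ sq) ?mulr0 //; lia.
rewrite [p`_ _](leq_sizeP _ _ sp) ?mul0r //.
by move: le_aj hja; rewrite -val_eqE /=; lia.
Qed.

Lemma prod_at_bound (I : Type) (r : seq I) (F : I -> {poly R}) (e : I -> nat) :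
  (forall i, size (F i) <= (e i).+1)%N ->
  (size (\prod_(i <- r) F i)%R <= (\sum_(i <- r) e i).+1)%N /\
  (\prod_(i <- r) F i)`_(\sum_(i <- r) e i)%N = \prod_(i <- r) (F i)`_(e i).
Proof.
move=> sF; elim: r => [|i r [IHsize IHcoef]]; first by rewrite !big_nil size_poly1 coef1.
rewrite !big_cons coefM_at_bound // IHcoef; split=> //.
rewrite (leq_trans (size_polyMleq _ _)) //.
by move: (sF i) IHsize; move: (size (F i)) (size (\prod_(j <- r) F j)) => u v; lia.
Qed.

Lemma det_at_row_bounds n (M : 'M[{poly R}]_n) (e : 'I_n -> nat) :
  (forall i j, size (M i j) <= (e i).+1)%N ->
  (size (\det M) <= (\sum_i e i).+1)%N /\
  (\det M)`_(\sum_i e i)%N = \det (\matrix_(i, j) (M i j)`_(e i)).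
Proof.
move=> sM; split.
  apply: (big_ind (fun p : {poly R} => size p <= (\sum_i e i).+1)%N).
  - by rewrite size_poly0.
  - by move=> p q sp sq; rewrite (leq_trans (size_polyD _ _)) // geq_max sp sq.
  move=> s _; rewrite mulr_sign.
  have [+ _] := prod_at_bound (index_enum _) (fun i => sM i (s i)).
  by case: (odd_perm s); rewrite ?size_polyN.
rewrite /determinant coef_sum; apply: eq_bigr => s _.
have [_ top] := prod_at_bound (index_enum _) (fun i => sM i (s i)).
rewrite !mulr_sign (eq_bigr (fun i => (M i (s i))`_(e i))) => [|i _]; last by rewrite mxE.
by case: (odd_perm s); rewrite ?coefN top.
Qed.

End CoefAtBound.

Lemma lead_coef_resultant_neq0 (K : closedFieldType) d eX eY
    (X Y : {poly {poly {poly K}}}) (U V : {poly K}) (a : K) :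
  size X = d.+1 -> size Y = d.+1 ->
  (forall i, size (X`_i)%R <= eX.+1)%N -> (forall i, size (Y`_i)%R <= eY.+1)%N ->
  (forall i, U`_i = (X`_i`_eX).[a]) -> (forall i, V`_i = (Y`_i`_eY).[a]) ->
  size U = d.+1 \/ size V = d.+1 -> (forall z, ~~ (root U z && root V z)) ->
  (lead_coef (resultant X Y)).[a] != 0.
Proof.
move=> sX sY sXi sYi eU eV full no_root.
have sU : (size U <= d.+1)%N.
  apply/leq_sizeP => i le_di.
  by rewrite eU (leq_sizeP _ _ (leqnn _) i) ?sX // coef0 horner0.
have sV : (size V <= d.+1)%N.
  apply/leq_sizeP => i le_di.
  by rewrite eV (leq_sizeP _ _ (leqnn _) i) ?sY // coef0 horner0.
pose e (i : 'I_(d + d)) : nat := if split i is inl _ then eX else eY.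
have sM i j : (size (Sylvester_mxn d d X Y i j) <= (e i).+1)%N.
  rewrite Sylvester_mxnE /e; case: (split i) => k; case: (k <= j)%N;
    by rewrite ?mulr1n ?mulr0n ?size_poly0.
have [size_det coef_det] := det_at_row_bounds sM.
have top_eval : ((\det (Sylvester_mxn d d X Y))`_(\sum_i e i)).[a] =
                \det (Sylvester_mxn d d U V).
  rewrite coef_det -horner_evalE -det_map_mx; congr (\det _); apply/matrixP => i j.
  rewrite [LHS]mxE [in LHS]mxE !Sylvester_mxnE /e.
  case: (split i) => k; case: (k <= j)%N;
    by rewrite ?mulr1n ?mulr0n ?coef0 ?rmorph0 ?horner_evalE ?eU ?eV.
have nz_top : \det (Sylvester_mxn d d U V) != 0.
  by apply/eqP => /(det_Sylvester_mxn_eq0 sU sV full)[z]; apply/negP.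
have size_eq : size (\det (Sylvester_mxn d d X Y)) = (\sum_i e i).+1.
  apply/eqP; rewrite eqn_leq size_det ltnNge; apply: contra nz_top.
  by move/leq_sizeP/(_ _ (leqnn _)); rewrite -top_eval => ->; rewrite horner0.
by rewrite resultantE sX sY lead_coefE size_eq /= top_eval.
Qed.

Section Bivariate.
Variable K : fieldType.
Implicit Types (Q : {poly {poly K}}) (a b : K).

Lemma horner2E Q a b : Q.[b%:P].[a] = (map_poly (horner_eval a) Q).[b].
Proof. by rewrite -[in RHS](hornerC b a) horner_map /= horner_evalE. Qed.

Lemma size_map_horner_eval Q a :
  (lead_coef Q).[a] != 0 -> size (map_poly (horner_eval a) Q) = size Q.
Proof. by move=> lc_a; rewrite size_map_poly_id0 // horner_evalE. Qed.

Lemma size_gt1_horner2 Q a b :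
  (lead_coef Q).[a] != 0 -> Q.[b%:P].[a] = 0 -> (1 < size Q)%N.
Proof.
move=> lc_a ab; rewrite -(size_map_horner_eval lc_a); apply: (@root_size_gt1 _ b).
  rewrite -size_poly_eq0 size_map_horner_eval // size_poly_eq0.
  by apply: contraNneq lc_a => ->; rewrite lead_coef0 horner0.
by rewrite /root -horner2E ab.
Qed.

Lemma coef_lead_coef_swapXY Q i : (lead_coef (swapXY Q))`_i = Q`_i`_(sizeY Q).-1.
Proof. by rewrite lead_coefE coef_swapXY sizeYE. Qed.

Lemma size_lead_coef_swapXY Q : (size (lead_coef (swapXY Q)) <= size Q)%N.
Proof.
apply/leq_sizeP => j le_Qj.
by rewrite coef_lead_coef_swapXY (leq_sizeP _ _ (leqnn _) j) ?coef0.
Qed.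

Lemma size_res_step_args Q :
  size (map_poly polyC Q) = size Q /\ size (map_poly (map_poly polyC) Q) = size Q.
Proof.
rewrite size_map_polyC size_map_inj_poly // ?map_poly0 //.
exact: map_inj_poly polyC_inj _.
Qed.

Lemma res_step_horner2 Q a b :
  (res_step Q).[b%:P].[a] =
    \det (Sylvester_mxn (size Q).-1 (size Q).-1
            (map_poly (horner_eval a) Q) (map_poly (horner_eval b) Q)).
Proof.
have [sQC sQCC] := size_res_step_args Q.
rewrite /res_step -[_.[b%:P]]horner_evalE map_resultant_mxn sQC sQCC.
rewrite -horner_evalE -det_map_mx map_Sylvester_mxn -!map_poly_comp.
congr (\det (Sylvester_mxn _ _ _ _)); apply: eq_map_poly => c /=;
  by rewrite !horner_evalE /= ?horner_map !hornerE.
Qed.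

Lemma swapXY_res_step Q :
  swapXY (res_step Q) = resultant (map_poly (map_poly polyC) Q) (map_poly polyC Q).
Proof.
have [sQC sQCC] := size_res_step_args Q.
rewrite /res_step map_resultant_mxn resultantE sQC sQCC -!map_poly_comp.
by congr (\det (Sylvester_mxn _ _ _ _)); apply: eq_map_poly => c /=;
  rewrite ?swapXY_polyC ?swapXY_map_polyC.
Qed.

End Bivariate.

Section BivariateClosed.
Variable K : closedFieldType.
Implicit Types (Q : {poly {poly K}}) (a b : K).

Lemma exists_root_horner2 Q a :
  (1 < size Q)%N -> (lead_coef Q).[a] != 0 -> exists z, Q.[z%:P].[a] = 0.
Proof.
move=> sQ lc_a; have /closed_rootP[z az] : size (map_poly (horner_eval a) Q) != 1%N.
  by rewrite size_map_horner_eval // gtn_eqF.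
by exists z; rewrite horner2E; apply/eqP.
Qed.

Lemma res_step_horner2_eq0 Q a b :
  (1 < size Q)%N -> (lead_coef Q).[a] != 0 \/ (lead_coef Q).[b] != 0 ->
  (res_step Q).[b%:P].[a] = 0 <-> exists z, Q.[z%:P].[a] = 0 /\ Q.[z%:P].[b] = 0.
Proof.
move=> sQ lc_ab; have sQ' : (size Q).-1.+1 = size Q by rewrite prednK // ltnW.
have size_le c : (size (map_poly (horner_eval c) Q) <= (size Q).-1.+1)%N.
  by rewrite sQ' size_poly.
rewrite res_step_horner2 det_Sylvester_mxn_eq0 ?size_le //; last first.
  by rewrite sQ'; case: lc_ab => /size_map_horner_eval; [left | right].
split=> -[z hz]; exists z; move: hz; rewrite /root !horner2E.
  by case/andP => /eqP -> /eqP ->.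
by case=> -> ->; rewrite eqxx.
Qed.

(* [lead_coef (swapXY Q)] is lc_x(Q), a polynomial in y.  At x = a the top
   y-coefficient of res_z(Q(x,z), Q(y,z)) is res_z(Q(a,z), lc_x(Q)(z)). *)
Lemma lead_coefs_res_step_neq0 Q a :
  (1 < size Q)%N -> (lead_coef Q).[a] != 0 ->
  (forall z, Q.[z%:P].[a] = 0 -> (lead_coef (swapXY Q)).[z] != 0) ->
  (lead_coef (res_step Q)).[a] != 0 /\ (lead_coef (swapXY (res_step Q))).[a] != 0.
Proof.
move=> sQ lc_a lcX_roots; have sQ' : (size Q).-1.+1 = size Q by rewrite prednK // ltnW.
have [sQC sQCC] := size_res_step_args Q.
have sQCi i : (size ((map_poly polyC Q)`_i)%R <= 0.+1)%N.
  by rewrite coef_map size_polyC_leq1.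
have sQCCi i : (size ((map_poly (map_poly polyC) Q)`_i)%R <= (sizeY Q).-1.+1)%N.
  by rewrite coef_map size_map_polyC (leq_trans (max_size_coefXY _ _)) // leqSpred.
have eU i : (map_poly (horner_eval a) Q)`_i = ((map_poly polyC Q)`_i`_0).[a].
  by rewrite !coef_map /= coefC.
have eV i :
    (lead_coef (swapXY Q))`_i = ((map_poly (map_poly polyC) Q)`_i`_(sizeY Q).-1).[a].
  by rewrite coef_lead_coef_swapXY !coef_map /= hornerC.
have full : size (map_poly (horner_eval a) Q) = (size Q).-1.+1.
  by rewrite sQ' size_map_horner_eval.
have no_root z :
    ~~ (root (map_poly (horner_eval a) Q) z && root (lead_coef (swapXY Q)) z).
  by apply/andP => -[/eqP]; rewrite -horner2E => /lcX_roots/negP.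
rewrite -{}sQ' in sQC sQCC; split.
  exact: lead_coef_resultant_neq0 sQC sQCC sQCi sQCCi eU eV (or_introl full) no_root.
rewrite swapXY_res_step.
apply: lead_coef_resultant_neq0 sQCC sQC sQCCi sQCi eV eU (or_intror full) _ => z.
by rewrite andbC.
Qed.

End BivariateClosed.

Section SquareFreePart.
Variable K : fieldType.
Implicit Types (q f : {poly {poly K}}) (a b : K).

Lemma is_sfp_root q f a b : is_sfp q f -> q.[b%:P].[a] = 0 <-> f.[b%:P].[a] = 0.
Proof.
case=> q0 sfp_f; have [f0|nz_f] := eqVneq f 0; first by rewrite f0 q0 // !horner0.
have [[c ->] [k [c' f_qk]] _] := sfp_f nz_f; rewrite !hornerM.
split=> [->|]; first by rewrite mulr0.
move/eqP; rewrite mulf_eq0 => /orP[/eqP c0|/eqP //].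
move/(congr1 (fun r => r.[b%:P].[a])): f_qk => /eqP.
by rewrite !(hornerM, horner_exp) c0 mul0r mulr0 expf_eq0 => /andP[_ /eqP].
Qed.

Lemma is_sfp_lead_coef q f a :
  is_sfp q f -> (lead_coef f).[a] != 0 -> (lead_coef q).[a] != 0.
Proof.
case=> _ sfp_f lc_a; have [f0|nz_f] := eqVneq f 0.
  by rewrite f0 lead_coef0 horner0 eqxx in lc_a.
have [[c f_cq] _ _] := sfp_f nz_f.
by apply: contraNneq lc_a; rewrite f_cq lead_coefM hornerM => ->; rewrite mulr0.
Qed.

Lemma is_sfp_lead_coefX q f a :
  is_sfp q f -> (lead_coef (swapXY f)).[a] != 0 -> (lead_coef (swapXY q)).[a] != 0.
Proof.
case=> _ sfp_f lc_a; have [f0|nz_f] := eqVneq f 0.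
  by rewrite f0 rmorph0 lead_coef0 horner0 eqxx in lc_a.
have [[c f_cq] _ _] := sfp_f nz_f.
by apply: contraNneq lc_a; rewrite f_cq rmorphM lead_coefM hornerM => ->; rewrite mulr0.
Qed.

End SquareFreePart.

Section Curve.
Variables (K : fieldType) (p : {poly {poly K}}).

Lemma degxE : degx p = (sizeY p).-1.
Proof.
by rewrite /degx /sizeY (big_morph predn (id1 := 0%N) (op1 := maxn)) // => m n; lia.
Qed.

Lemma size_coef_degx j : (size (p`_j)%R <= (degx p).+1)%N.
Proof. by rewrite degxE (leq_trans (max_size_coefXY _ _)) // leqSpred. Qed.

Lemma bihom_eval_affine a b : bihom_eval p 1 a 1 b = p.[b%:P].[a].
Proof.
rewrite /bihom_eval horner2E (horner_coef_wide _ (size_poly _ _)).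
apply: eq_bigr => j _; rewrite coef_map /= horner_evalE.
rewrite (horner_coef_wide _ (size_coef_degx j)) mulr_suml.
by apply: eq_bigr => i _; rewrite !expr1n !mulr1.
Qed.

Lemma bihom_eval_inf_y a : (0 < size p)%N -> bihom_eval p 1 a 0 1 = (lead_coef p).[a].
Proof.
move=> p_gt0; have top : ((size p).-1 < size p)%N by rewrite prednK.
rewrite /bihom_eval (bigD1 (Ordinal top)) //= [X in _ + X]big1 ?addr0 => [|j /negbTE ne_j].
  rewrite lead_coefE (horner_coef_wide _ (size_coef_degx _)).
  by apply: eq_bigr => i _; rewrite /degy subnn !expr0 !expr1n !mulr1.
rewrite big1 // => i _; rewrite expr0n /degy subn_eq0 leqNgt.
move: ne_j; rewrite -val_eqE /= => ne_j.
by rewrite ltn_neqAle ne_j -ltnS prednK // ltn_ord mulr0.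
Qed.

Lemma bihom_eval_inf_x b : bihom_eval p 0 1 1 b = (lead_coef (swapXY p)).[b].
Proof.
rewrite /bihom_eval (horner_coef_wide _ (size_lead_coef_swapXY p)).
apply: eq_bigr => j _; rewrite big_ord_recr /= big1 ?add0r => [|i _].
  by rewrite coef_lead_coef_swapXY -degxE subnn !expr0 !expr1n !mulr1.
by rewrite expr0n subn_eq0 leqNgt ltn_ord mulr0 !mul0r.
Qed.

Lemma onC_Some a b : onC p (Some a) (Some b) <-> p.[b%:P].[a] = 0.
Proof. by rewrite /onC /= bihom_eval_affine. Qed.

Lemma onC_Some_None a : (0 < size p)%N -> onC p (Some a) None <-> (lead_coef p).[a] = 0.
Proof. by move=> p_gt0; rewrite /onC /= bihom_eval_inf_y. Qed.

Lemma onC_None_Some b : onC p None (Some b) <-> (lead_coef (swapXY p)).[b] = 0.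
Proof. by rewrite /onC /= bihom_eval_inf_x. Qed.

End Curve.

Section Orbits.
Variables (K : fieldType) (p : {poly {poly K}}).
Implicit Types (a b : K).

Lemma orbit_finite_onC a s : orbit_finite p a -> onC p (Some a) s -> s <> None.
Proof. by move=> fin_a on_as; have [_] := fin_a s (Some a, s) on_as (rt_refl _ _ _). Qed.

Lemma orbit_finite_onC_fibre a b s :
  orbit_finite p a -> onC p (Some a) (Some b) -> onC p s (Some b) -> s <> None.
Proof.
move=> fin_a on_ab on_sb; have [] // := fin_a (Some b) (s, Some b) on_ab.
by apply: rt_step; split; [|split; [|right]].
Qed.

Lemma orbit_finite_lead_coef a :
  (0 < size p)%N -> orbit_finite p a -> (lead_coef p).[a] != 0.
Proof.
by move=> p_gt0 fin_a; apply/eqP => /(onC_Some_None _ p_gt0)/(orbit_finite_onC fin_a).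
Qed.

Lemma orbit_finite_lead_coefX a b :
  orbit_finite p a -> p.[b%:P].[a] = 0 -> (lead_coef (swapXY p)).[b] != 0.
Proof.
move=> fin_a /onC_Some on_ab; apply/eqP => /onC_None_Some on_b.
exact: orbit_finite_onC_fibre fin_a on_ab on_b erefl.
Qed.

Lemma orbit_finite_fibre a a' b :
  orbit_finite p a -> onC p (Some a) (Some b) -> onC p (Some a') (Some b) ->
  orbit_finite p a'.
Proof.
move=> fin_a on_ab on_a'b b' w on_a'b' a'b'_w.
have step1 : orbit_step p (Some a, Some b) (Some a', Some b) by split; [|split; [|right]].
have step2 : orbit_step p (Some a', Some b) (Some a', b') by split; [|split; [|left]].
apply: fin_a on_ab _.
apply: (rt_trans _ _ _ (Some a', Some b)); first exact: rt_step.
by apply: (rt_trans _ _ _ (Some a', b')) a'b'_w; apply: rt_step.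
Qed.

Lemma Smap1_Some a b : orbit_finite p a ->
  Smap p (eq^~ (Some a)) (Some b) <-> exists z, p.[z%:P].[a] = 0 /\ p.[z%:P].[b] = 0.
Proof.
move=> fin_a; split=> [[_ [[z|] [-> [on_az on_bz]]]]|[z [/onC_Some az /onC_Some bz]]].
- by exists z; split; apply/onC_Some.
- by have := orbit_finite_onC fin_a on_az.
by exists (Some a), (Some z).
Qed.

Lemma iter_Smap_bigcup m (A : option K -> Prop) s :
  iter m (Smap p) A s <-> exists2 t, A t & iter m (Smap p) (eq^~ t) s.
Proof.
elim: m s => [|m IH] s /=; first by split=> [As|[t At ->]]; [exists s|].
split=> [[a [b [/IH[t At ta] ab]]]|[t At [a [b [ta ab]]]]].
  by exists t => //; exists a, b.
by exists a, b; split=> //; apply/IH; exists t.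
Qed.

Lemma iter_Smap_orbit_finite m a s :
  orbit_finite p a -> iter m (Smap p) (eq^~ (Some a)) s ->
  exists2 c, s = Some c & orbit_finite p c.
Proof.
move=> fin_a; elim: m s => [|m IH] s /=; first by move=> ->; exists a.
case=> _ [b [/IH[c -> fin_c] [on_cb on_sb]]].
case: b on_cb on_sb => [b|] on_cb on_sb; last by have := orbit_finite_onC fin_c on_cb.
case: s on_sb => [s|] on_sb; last by have := orbit_finite_onC_fibre fin_c on_cb on_sb.
by exists s => //; apply: orbit_finite_fibre fin_c on_cb on_sb.
Qed.

End Orbits.

Section Iteration.
Variables (K : closedFieldType) (p : {poly {poly K}}) (Q : nat -> {poly {poly K}}).
Hypotheses (Q0 : Q 0%N = p) (QS : forall k, is_sfp (Q k.+1) (res_step (Q k))).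
Hypothesis size_p : (1 < size p)%N.
Implicit Types (a b z : K).

Definition Srel k a b : Prop :=
  if k is k'.+1 then iter (2 ^ k') (Smap p) (eq^~ (Some a)) (Some b)
  else onC p (Some a) (Some b).

Definition good_level k : Prop := forall a, orbit_finite p a ->
  [/\ (lead_coef (Q k)).[a] != 0, (1 < size (Q k))%N,
      forall b, (Q k).[b%:P].[a] = 0 <-> Srel k a b,
      forall z, (Q k).[z%:P].[a] = 0 -> (lead_coef (swapXY (Q k))).[z] != 0 &
      (0 < k)%N -> forall b, (Q k).[a%:P].[b] = 0 <-> (Q k).[b%:P].[a] = 0].

Lemma Q_succ_root k a b :
  (1 < size (Q k))%N -> (lead_coef (Q k)).[a] != 0 \/ (lead_coef (Q k)).[b] != 0 ->
  (Q k.+1).[b%:P].[a] = 0 <-> exists z, (Q k).[z%:P].[a] = 0 /\ (Q k).[z%:P].[b] = 0.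
Proof. by move=> sQ lc_ab; rewrite is_sfp_root // res_step_horner2_eq0. Qed.

Lemma Q_succ_sym k a b : (1 < size (Q k))%N -> (lead_coef (Q k)).[a] != 0 ->
  (Q k.+1).[a%:P].[b] = 0 <-> (Q k.+1).[b%:P].[a] = 0.
Proof.
move=> sQ lc_a; rewrite !Q_succ_root //; [|by left|by right].
by split=> -[z [bz az]]; exists z.
Qed.

Lemma Srel_orbit_finite k a b :
  (0 < k)%N -> orbit_finite p a -> Srel k a b -> orbit_finite p b.
Proof. by case: k => // k _ fin_a /(iter_Smap_orbit_finite fin_a)[c [->]]. Qed.

Lemma good_level0 : good_level 0.
Proof.
move=> a fin_a; rewrite Q0; split=> // [|b|z].
- exact: orbit_finite_lead_coef (ltnW size_p) fin_a.
- by rewrite /Srel onC_Some.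
- exact: orbit_finite_lead_coefX.
Qed.

Lemma Srel_succ k a b : good_level k -> orbit_finite p a ->
  (exists z, (Q k).[z%:P].[a] = 0 /\ (Q k).[z%:P].[b] = 0) <-> Srel k.+1 a b.
Proof.
case: k => [|k] good fin_a.
  by rewrite Q0 /Srel expn0 /=; apply: iff_sym; apply: Smap1_Some.
have [_ _ zeros_a _ _] := good a fin_a.
rewrite /Srel expnS mul2n -addnn iterD iter_Smap_bigcup; split.
  case=> z [az bz]; have az' := (zeros_a z).1 az.
  have [_ _ zeros_z _ sym_z] := good z (Srel_orbit_finite (ltn0Sn _) fin_a az').
  by exists (Some z) => //; apply/(zeros_z b)/(sym_z isT).
case=> t at' tb; have [z tz fin_z] := iter_Smap_orbit_finite fin_a at'; subst t.
have [_ _ zeros_z _ sym_z] := good z fin_z.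
by exists z; split; [apply/(zeros_a z) | apply/(sym_z isT)/(zeros_z b)].
Qed.

Lemma good_levelS k : good_level k -> good_level k.+1.
Proof.
move=> good a fin_a; have [lc_a sQ _ _ _] := good a fin_a.
have zeros b : (Q k.+1).[b%:P].[a] = 0 <-> Srel k.+1 a b.
  by rewrite Q_succ_root //; [apply: Srel_succ | left].
have lcs z : orbit_finite p z ->
    (lead_coef (Q k.+1)).[z] != 0 /\ (lead_coef (swapXY (Q k.+1))).[z] != 0.
  move=> fin_z; have [lc_z _ _ lcX_z _] := good z fin_z.
  have [/(is_sfp_lead_coef (QS k)) lc'_z /(is_sfp_lead_coefX (QS k))] :=
    lead_coefs_res_step_neq0 sQ lc_z lcX_z.
  by split.
have [lc'_a _] := lcs a fin_a; split=> // [|z /zeros az|_ b]; last 2 first.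
- exact: (lcs z (Srel_orbit_finite (ltn0Sn _) fin_a az)).2.
- exact: Q_succ_sym.
have [z az] := exists_root_horner2 sQ lc_a.
by apply: (size_gt1_horner2 lc'_a (b := a)); apply/Q_succ_root => //; [left | exists z].
Qed.

Lemma good_level_all k : good_level k.
Proof. by elim: k => [|k]; [exact: good_level0 | exact: good_levelS]. Qed.

End Iteration.

Unset Implicit Arguments.
Theorem lemma3 (K : closedFieldType) (hK : [pchar K] =i pred0)
  (p : {poly {poly K}}) (hirr : irreducible_XY p)
  (hx : notin_Kx p) (hy : notin_Ky p)
  (Q : nat -> {poly {poly K}})
  (hQ0 : Q 0%N = p) (hQS : forall k : nat, is_sfp (Q k.+1) (res_step (Q k)))
  (n : nat) (hn : (0 < n)%N) (x0 y0 : K)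
  (hlc : forall k : nat, (k < n)%N -> ~~ root (lead_coef (Q k)) x0)
  (horb : orbit_finite p x0) :
  (Q n).[y0%:P].[x0] = 0 <->
  iter (2 ^ n.-1) (Smap p) (fun a => a = Some x0) (Some y0).
Proof.
have [_ _ zeros _ _] := good_level_all hQ0 hQS hx n horb.
by case: n hn {hlc} zeros => // n _; apply.
Qed.
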